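(* Let $g=\delta_{\{0\}}$ on $c_c$ (so $g^*\equiv 0$ on $\ell^2$). Then the primal problem $\inf_{x\in c_c}\left(f(x)+g(x)\right)$ has value $f(0)=\pi^2/12$, and the Fenchel dual problem $\sup_{y\in\ell^2}\left(-f^*(y)-g^*(-y)\right)=\sup_{y\in\ell^2}\left(-f^*(y)\right)$ also has value $\pi^2/12$ (no duality gap), but the dual supremum is not attained by any $y\in\ell^2$.
   Context: Let $c_c$ be the space of finitely supported real sequences with the $\ell^2$-norm; its dual is identified with $\ell^2$ via $\langle y,x\rangle=\sum_n y_nx_n$. Let $f\colon c_c\to\mathbb{R}$, $f(x)=\sum_{n=1}^\infty \frac{n^2}{2}(x_n-n^{-2})^2$. For $h\colon c_c\to(-\infty,\infty]$, $h^*(y)=\sup_{x\in c_c}(\langle y,x\rangle-h(x))$ for $y\in\ell^2$. $\delta_{\{0\}}$ denotes the indicator function of $\{0\}$ (value $0$ at $0$ and $+\infty$ elsewhere). *)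

From HB Require Import structures.
From mathcomp Require Import all_boot all_order all_algebra.
From mathcomp Require Import all_classical all_reals all_analysis.
Set Implicit Arguments. Unset Strict Implicit. Unset Printing Implicit Defensive.
Import Order.TTheory GRing.Theory Num.Theory.
Import numFieldNormedType.Exports.
Local Open Scope classical_set_scope.
Local Open Scope ring_scope.

(* Convention: a real sequence (x_n)_{n>=1} is represented by x : nat -> R
   with x k standing for x_{k+1}. *)

Section Defs.
Variable R : realType.

Definition cc : set (nat -> R) :=
  [set x | exists N : nat, forall k : nat, (N <= k)%N -> x k = 0].

Definition l2 : set (nat -> R) :=
  [set y | (\sum_(0 <= k <oo) ((y k ^+ 2)%:E) < +oo)%E].

Definition pairing (y x : nat -> R) : R :=
  limn (series (fun k => y k * x k)).

Definition fobj (x : nat -> R) : \bar R :=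
  (\sum_(0 <= k <oo)
     ((((k.+1)%:R ^+ 2) / 2 * (x k - ((k.+1)%:R ^+ 2)^-1) ^+ 2)%:E))%E.

Definition gind (x : nat -> R) : \bar R :=
  if `[< x = (fun _ => 0) >] then 0%E else (+oo)%E.

Definition fconj (h : (nat -> R) -> \bar R) (y : nat -> R) : \bar R :=
  ereal_sup [set ((pairing y x)%:E - h x)%E | x in cc].

End Defs.

(* For x in c_c the series f(x) differs from f(0) = (1/2) sum 1/n^2 = pi^2/12 in
   finitely many terms. Basel's sum comes from the identity
   sum_(k<N) csc^2((2k+1) pi / (4N)) = 2 N^2, obtained by doubling N with
   csc^2(2t) = (csc^2 t + csc^2(pi/2 - t)) / 4, and from 1/x^2 <= csc^2 x <= 1/x^2 + 1.
   Since g forces x = 0, the primal value is f(0) and g^* = 0. The conjugate of f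
   splits over coordinates: n^2/2 (t - 1/n^2)^2 - 1/(2n^2) = n^2 t^2/2 - t has
   conjugate (1 + s)^2/(2n^2) at s. Hence -f^*(y) <= pi^2/12 - sum (1 + y_n)^2/(2n^2),
   so the dual value could only be attained at y = -1, which is not in l^2, while
   the truncations of -1 show that pi^2/12 is the supremum. *)

From HB Require Import structures.
From mathcomp Require Import all_boot all_order all_algebra.
From mathcomp Require Import all_classical all_reals all_analysis.
From mathcomp Require Import lra ring zify.
Import Order.TTheory GRing.Theory Num.Theory.
Import numFieldNormedType.Exports.
Local Open Scope classical_set_scope.
Local Open Scope ring_scope.

Section Basel.
Context {R : realType}.

Lemma sin_le_id (x : R) : 0 <= x -> sin x <= x.
Proof.
move=> x0.
have [c _ h] := MVT_segment x0 (fun y _ => is_derive_sin y)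
  (continuous_subspaceT (@continuous_sin R)).
by move: h; rewrite sin0 !subr0 => ->; rewrite ler_piMl // cos_le1.
Qed.

Lemma mul_cos_le_sin (x : R) : 0 <= x <= pi -> x * cos x <= sin x.
Proof.
move=> /andP[x0 xpi].
have hd (y : R) : is_derive y 1 (fun t => sin t - t * cos t) (y * sin y).
  apply: is_derive_eq; change (cos y - (y * - sin y + cos y * 1) = y * sin y).
  by ring.
have hc : {within `[0, x], continuous (fun t : R => sin t - t * cos t)}.
  by apply: derivable_within_continuous => t _; case: (hd t).
have [c /[!in_itv]/= /andP[c0 cx] h] := MVT_segment x0 (fun y _ => hd y) hc.
move: h; rewrite sin0 mul0r !subr0 => h.
by rewrite -subr_ge0 h !mulr_ge0 // sin_ge0_pi // c0 (le_trans cx xpi).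
Qed.

Definition csc2 (x : R) : R := (sin x ^+ 2)^-1.

Lemma sin_cos_gt0_pihalf (t : R) : 0 < t < pi / 2 -> 0 < sin t /\ 0 < cos t.
Proof.
move=> /andP[t0 tpi2]; split; first by rewrite sin_gt0_pihalf // t0.
by rewrite cos_gt0_pihalf // tpi2 andbT (lt_trans _ t0) // oppr_lt0 divr_gt0 ?pi_gt0.
Qed.

Lemma csc2_bounds (x : R) : 0 < x < pi / 2 ->
  (x ^+ 2)^-1 <= csc2 x /\ csc2 x - 1 <= (x ^+ 2)^-1.
Proof.
move=> /[dup] /sin_cos_gt0_pihalf[s0 c0] /andP[x0 xpi2].
have xpi : x <= pi by rewrite ltW // (lt_trans xpi2) // ltr_pdivrMr // ltr_pMr ?pi_gt0 ?ltr1n.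
split.
  rewrite /csc2 lef_pV2 ?posrE ?exprn_gt0 //.
  by rewrite ler_sqr ?nnegrE ?sin_le_id ?ltW.
have -> : csc2 x - 1 = cos x ^+ 2 / sin x ^+ 2.
  by rewrite /csc2 cos2sin2; field; rewrite lt0r_neq0.
rewrite ler_pdivrMr ?exprn_gt0 // ler_pdivlMl ?exprn_gt0 // -exprMn.
rewrite ler_sqr ?nnegrE ?mulr_ge0 ?(ltW x0) ?(ltW c0) ?(ltW s0) //.
by rewrite mul_cos_le_sin // (ltW x0).
Qed.

Lemma sin_pihalfB (t : R) : sin (pi / 2 - t) = cos t.
Proof. by rewrite sinB sin_pihalf cos_pihalf mul1r mul0r subr0. Qed.

Lemma csc2_mulr2n (t : R) : sin t != 0 -> cos t != 0 ->
  csc2 (t *+ 2) = (csc2 t + csc2 (pi / 2 - t)) / 4.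
Proof.
move=> s0 c0; rewrite /csc2 sin_pihalfB sin_mulr2n.
have -> : (sin t ^+ 2)^-1 + (cos t ^+ 2)^-1 =
    (cos t ^+ 2 + sin t ^+ 2) / (sin t ^+ 2 * cos t ^+ 2).
  by field; rewrite s0 c0.
rewrite cos2Dsin2 mulr2n; field.
by rewrite c0 s0 -mulr2n mulrn_eq0 negb_or mulf_neq0.
Qed.

Definition odd_angle (N k : nat) : R := (k.*2.+1)%:R * pi / (N * 4)%:R.

Definition csc2_sum (N : nat) : R := \sum_(0 <= k < N) csc2 (odd_angle N k).

Lemma odd_angle_bounds N k : (k < N)%N -> 0 < odd_angle N k < pi / 2.
Proof.
move=> kN; have N0 : (0 < N)%N by apply: leq_ltn_trans kN.
rewrite /odd_angle divr_gt0 ?mulr_gt0 ?pi_gt0 ?ltr0n ?muln_gt0 ?N0 //=.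
rewrite ltr_pdivrMr ?ltr0n ?muln_gt0 ?N0 // natrM.
have k2N : (k.*2.+1)%:R < (N%:R * 2 : R) by rewrite -natrM ltr_nat; lia.
by have := @pi_gt0 R; nra.
Qed.

(* Pairing the angles t and pi/2 - t of the 2N-family through [csc2_mulr2n]
   yields the N-family. *)
Lemma csc2_sum_double N : csc2_sum N.*2 = 4 * csc2_sum N.
Proof.
rewrite /csc2_sum (big_cat_nat _ (n := N)) //=; last by rewrite -addnn leq_addr.
rewrite (big_addn 0 _ N) (_ : N.*2 - N = N)%N; last by rewrite -addnn addnK.
rewrite [X in _ + X]big_nat_rev /= -big_split big_distrr /=.
apply: eq_big_nat => k /andP[_ kN].
have N0 : (N%:R : R) != 0 by rewrite pnatr_eq0 -lt0n (leq_ltn_trans _ kN).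
have halve : odd_angle N k = odd_angle N.*2 k *+ 2.
  by rewrite /odd_angle -!muln2 !natrM mulr2n; field.
have mirror : odd_angle N.*2 (0 + N - k.+1 + N) = pi / 2 - odd_angle N.*2 k.
  have e : ((0 + N - k.+1 + N).*2.+1 = N * 4 - k.*2.+1)%N by rewrite -!muln2; lia.
  rewrite /odd_angle e natrB -?muln2 ?natrM; [by field | lia].
have [s0 c0] : 0 < sin (odd_angle N.*2 k) /\ 0 < cos (odd_angle N.*2 k).
  by apply/sin_cos_gt0_pihalf/odd_angle_bounds; rewrite -addnn ltn_addr.
by rewrite mirror halve csc2_mulr2n ?lt0r_neq0 //; field.
Qed.

Lemma csc2_sum1 : csc2_sum 1 = 2.
Proof.
have /sin_cos_gt0_pihalf[s0 c0] := odd_angle_bounds 1 0 (ltn0Sn 0).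
have := csc2_mulr2n _ (lt0r_neq0 s0) (lt0r_neq0 c0); rewrite /csc2_sum big_nat1.
have -> : odd_angle 1 0 = pi / 4 by rewrite /odd_angle mul1n (_ : (0.*2.+1)%:R = 1) ?mul1r.
rewrite (_ : pi / 4 *+ 2 = pi / 2); last by rewrite mulr2n; field.
rewrite (_ : pi / 2 - pi / 4 = pi / 4); last by field.
by rewrite {1}/csc2 sin_pihalf expr1n invr1; lra.
Qed.

Lemma csc2_sum_pow2 n : csc2_sum (2 ^ n)%N = 2 * (2 ^ n)%N%:R ^+ 2.
Proof.
elim: n => [|n IH]; first by rewrite expn0 csc2_sum1 expr1n mulr1.
by rewrite expnS mul2n csc2_sum_double IH -muln2 natrM; ring.
Qed.

Definition inv_sq (k : nat) : R := ((k.+1)%:R ^+ 2)^-1.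

Definition odd_inv_sq (k : nat) : R := ((k.*2.+1)%:R ^+ 2)^-1.

Lemma series_nondecreasing (u : R ^nat) : (forall k, 0 <= u k) ->
  {homo series u : m n / (m <= n)%N >-> m <= n}.
Proof. by move=> u0 m n; apply: (nondecreasing_series (P := xpredT)). Qed.

(* On (0, pi/2) the function csc^2 is 1/x^2 up to an additive error in [0, 1], so
   the exact value of [csc2_sum] pins down the odd sums at the angles [odd_angle]. *)
Lemma series_odd_inv_sq_pow2 n :
  series odd_inv_sq (2 ^ n)%N <= pi ^+ 2 / 8 /\
  pi ^+ 2 / 8 - pi ^+ 2 / (16 * (2 ^ n)%N%:R) <= series odd_inv_sq (2 ^ n)%N.
Proof.
set N := (2 ^ n)%N; set M : R := N%:R.
have M0 : 0 < M by rewrite ltr0n expn_gt0.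
have p0 := @pi_gt0 R.
set c : R := (M * 4) ^+ 2 / pi ^+ 2.
have scale : \sum_(0 <= k < N) (odd_angle N k ^+ 2)^-1 = c * series odd_inv_sq N.
  rewrite /series /= big_distrr /=; apply: eq_big_nat => k _.
  rewrite /odd_angle /odd_inv_sq /c /M natrM.
  have : (k.*2.+1)%:R != 0 :> R by rewrite pnatr_eq0.
  move: (@pi R) p0 ((k.*2.+1)%:R : R) => p p0 a a0.
  by field; rewrite a0 lt0r_neq0 //= pnatr_eq0 -lt0n expn_gt0.
have up : c * series odd_inv_sq N <= csc2_sum N.
  rewrite -scale; apply: ler_sum_nat => k /andP[_ kN].
  exact: (csc2_bounds _ (odd_angle_bounds _ _ kN)).1.
have lo : csc2_sum N - M <= c * series odd_inv_sq N.
  rewrite -scale (_ : M = \sum_(0 <= k < N) 1); last by rewrite sumr_const_nat subn0.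
  rewrite -sumrB; apply: ler_sum_nat => k /andP[_ kN].
  exact: (csc2_bounds _ (odd_angle_bounds _ _ kN)).2.
rewrite /N csc2_sum_pow2 -/N -/M /c in up lo.
move: (series _ _) (@pi R) p0 up lo => o p p0 up lo.
have Mn : M != 0 by rewrite lt0r_neq0.
have pn : p != 0 by rewrite lt0r_neq0.
have eO : o = ((M * 4) ^+ 2 / p ^+ 2 * o) * (p ^+ 2 / (16 * M ^+ 2)).
  by field; rewrite Mn pn.
have w0 : 0 <= p ^+ 2 / (16 * M ^+ 2) by rewrite divr_ge0 ?exprn_ge0 ?mulr_ge0 ?ltW.
have up_val : 2 * M ^+ 2 * (p ^+ 2 / (16 * M ^+ 2)) = p ^+ 2 / 8 by field.
have lo_val : (2 * M ^+ 2 - M) * (p ^+ 2 / (16 * M ^+ 2)) = p ^+ 2 / 8 - p ^+ 2 / (16 * M).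
  by field.
by rewrite eO -lo_val -up_val; split; exact: ler_wpM2r.
Qed.

Lemma inv_sq_double k : inv_sq k.*2.+1 = inv_sq k / 4.
Proof.
rewrite /inv_sq -muln2 -addn2 -[k.+1]addn1 !natrD natrM.
have k1 : k%:R + 1%:R != 0 :> R by rewrite -natrD pnatr_eq0 addn1.
by field; rewrite k1 (_ : k%:R * 2 + 2 = (k%:R + 1) * 2) ?mulf_neq0 //; ring.
Qed.

Lemma series_inv_sq_double N :
  series inv_sq N.*2 = series odd_inv_sq N + series inv_sq N / 4.
Proof.
elim: N => [|N IH]; first by rewrite /series /= !big_geq // mul0r addr0.
move: IH; rewrite doubleS /series /= !big_nat_recr //= => ->.
by rewrite inv_sq_double /odd_inv_sq /inv_sq; ring.
Qed.

Lemma series_odd_inv_sq_le N : series odd_inv_sq N <= pi ^+ 2 / 8.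
Proof.
apply: le_trans (series_odd_inv_sq_pow2 N).1.
apply: series_nondecreasing; last exact/ltnW/ltn_expl.
by move=> k; rewrite invr_ge0 sqr_ge0.
Qed.

Lemma series_inv_sq_le N : series inv_sq N <= pi ^+ 2 / 6.
Proof.
have mono : series inv_sq N <= series inv_sq N.*2.
  apply: series_nondecreasing; last by rewrite -addnn leq_addr.
  by move=> k; rewrite invr_ge0 sqr_ge0.
have := series_inv_sq_double N; have := series_odd_inv_sq_le N.
by move: (pi ^+ 2 : R) => p; lra.
Qed.

Lemma series_inv_sq_pow2_ge n :
  pi ^+ 2 / 6 - pi ^+ 2 / (4 * (2 ^ n)%N%:R) <= series inv_sq (2 ^ n)%N.
Proof.
have p0 : 0 <= pi ^+ 2 :> R by rewrite sqr_ge0.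
elim: n => [|n IH].
  rewrite expn0 /series /= big_nat1 mulr1 /inv_sq expr1n invr1.
  by move: (pi ^+ 2 : R) p0 => p; lra.
rewrite expnS mul2n series_inv_sq_double -mul2n natrM.
have := (series_odd_inv_sq_pow2 n).2; move: IH.
have N0 : (2 ^ n)%N%:R != 0 :> R by rewrite pnatr_eq0 expn_eq0.
rewrite !mulrA (_ : pi ^+ 2 / (16 * _) = pi ^+ 2 / (2 ^ n)%N%:R / 16); last by field.
rewrite (_ : pi ^+ 2 / (4 * _) = pi ^+ 2 / (2 ^ n)%N%:R / 4); last by field.
rewrite (_ : pi ^+ 2 / (4 * 2%:R * _) = pi ^+ 2 / (2 ^ n)%N%:R / 8); last by field.
move: (pi ^+ 2 / (2 ^ n)%N%:R) => u; move: (pi ^+ 2 : R) => p; lra.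
Qed.

Theorem basel : series inv_sq @ \oo --> pi ^+ 2 / 6.
Proof.
apply/cvgrPdist_le => e e0.
have p0 : 0 < pi ^+ 2 :> R by rewrite exprn_gt0 // pi_gt0.
set n := Num.trunc (pi ^+ 2 / (4 * e)).
have hn : pi ^+ 2 / (4 * e) < (2 ^ n)%N%:R.
  by apply: (lt_le_trans (truncnS_gt _)); rewrite ler_nat ltn_expl.
near=> t; rewrite ger0_norm ?subr_ge0 ?series_inv_sq_le //.
have tail : pi ^+ 2 / (4 * (2 ^ n)%N%:R) <= e.
  rewrite ler_pdivrMr ?mulr_gt0 ?ltr0n ?expn_gt0 // -[e * _]mulrCA mulrA.
  by rewrite ltr_pdivrMr ?mulr_gt0 // in hn; rewrite mulrC ltW.
have mono : series inv_sq (2 ^ n)%N <= series inv_sq t.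
  apply: series_nondecreasing; last by near: t; exists (2 ^ n)%N.
  by move=> k; rewrite invr_ge0 sqr_ge0.
have := series_inv_sq_pow2_ge n; move: tail mono; clear hn.
by move: (pi ^+ 2 / _) (pi ^+ 2 / 6) => a b; lra.
Unshelve. all: by end_near.
Qed.

End Basel.

Section FiniteSupport.
Context {R : realFieldType}.

Lemma cvg_series_finsupp (u : R ^nat) M : (forall k, (M <= k)%N -> u k = 0) ->
  series u @ \oo --> series u M.
Proof.
move=> u0; apply: cvg_near_cst; near=> n.
have Mn : (M <= n)%N by near: n; exists M.
rewrite /series /= (big_cat_nat _ Mn) //= [X in _ + X]big1_seq ?addr0 //.
by move=> k /andP[_]; rewrite mem_index_iota => /andP[/u0].
Unshelve. all: by end_near.
Qed.

Lemma eseries_EFin (u : R ^nat) l : series u @ \oo --> l ->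
  (\sum_(0 <= k <oo) (u k)%:E)%E = l%:E.
Proof.
move=> ul; rewrite (_ : (fun n => _) = EFin \o series u).
  by rewrite EFin_lim ?(cvg_lim _ ul) //; apply/cvg_ex; exists l.
by apply/funext => n /=; rewrite sumEFin.
Qed.

End FiniteSupport.

Section Duality.
Context {R : realType}.

Definition fterm (k : nat) (t : R) : R := (k.+1)%:R ^+ 2 / 2 * (t - inv_sq k) ^+ 2.

Lemma fterm0 k : fterm k 0 = inv_sq k / 2.
Proof. by rewrite /fterm /inv_sq sub0r sqrrN; field. Qed.

Lemma fterm0_gt0 k : 0 < fterm k 0.
Proof. by rewrite fterm0 divr_gt0 // invr_gt0 exprn_gt0 // ltr0n. Qed.

Lemma series_fterm0 N : series (fterm^~ 0) N = series inv_sq N / 2.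
Proof. by rewrite /series /= big_distrl /=; apply: eq_bigr => k _; rewrite fterm0. Qed.

Lemma cvg_series_fterm0 : series (fterm^~ 0) @ \oo --> pi ^+ 2 / 12.
Proof.
rewrite (_ : pi ^+ 2 / 12 = pi ^+ 2 / 6 / 2); last by field.
by rewrite (funext series_fterm0); exact: cvgMl basel.
Qed.

Lemma series_fterm0_le N : series (fterm^~ 0) N <= pi ^+ 2 / 12.
Proof.
rewrite series_fterm0 (_ : pi ^+ 2 / 12 = pi ^+ 2 / 6 / 2); last by field.
by rewrite ler_pM2r ?invr_gt0 // series_inv_sq_le.
Qed.

Lemma fobj_finsupp (x : nat -> R) M : (forall k, (M <= k)%N -> x k = 0) ->
  fobj x = (pi ^+ 2 / 12 + \sum_(0 <= k < M) (fterm k (x k) - fterm k 0))%:E.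
Proof.
move=> x0; apply: (@eseries_EFin _ (fun k => fterm k (x k))).
rewrite (_ : series _ = series (fterm^~ 0) \+ series (fun k => fterm k (x k) - fterm k 0)).
  apply: cvgD; first exact: cvg_series_fterm0.
  by apply: cvg_series_finsupp => k /x0 ->; rewrite subrr.
apply/funext => n; rewrite /series /= -big_split.
by apply: eq_bigr => k _ /=; rewrite addrCA subrr addr0.
Qed.

Lemma pairing_finsupp (y x : nat -> R) M : (forall k, (M <= k)%N -> x k = 0) ->
  pairing y x = \sum_(0 <= k < M) y k * x k.
Proof.
move=> x0; apply: cvg_lim => //; apply: cvg_series_finsupp => k /x0 ->.
exact: mulr0.
Qed.

Definition conj_gain (k : nat) (s t : R) : R := s * t - (fterm k t - fterm k 0).

(* [conj_gain k s] is the concave quadratic [(1 + s) t - (k+1)^2 t^2 / 2]. *)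
Lemma conj_gain_le k s t : conj_gain k s t <= (1 + s) ^+ 2 * fterm k 0.
Proof.
rewrite fterm0 /conj_gain /fterm /inv_sq; set c : R := (k.+1)%:R ^+ 2.
have c0 : 0 < c by rewrite exprn_gt0 // ltr0n.
rewrite -subr_ge0 (_ : _ - _ = (c * t - (1 + s)) ^+ 2 / (2 * c)).
  by rewrite divr_ge0 ?sqr_ge0 // mulr_ge0 // ltW.
by field; rewrite lt0r_neq0.
Qed.

Lemma conj_gain_argmax k s :
  conj_gain k s ((1 + s) * inv_sq k) = (1 + s) ^+ 2 * fterm k 0.
Proof. by rewrite fterm0 /conj_gain /fterm /inv_sq; field. Qed.

Lemma conj_objective_finsupp (y x : nat -> R) M :
  (forall k, (M <= k)%N -> x k = 0) ->
  ((pairing y x)%:E - fobj x)%E =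
  (\sum_(0 <= k < M) conj_gain k (y k) (x k) - pi ^+ 2 / 12)%:E.
Proof.
move=> x0; rewrite (pairing_finsupp _ _ _ x0) (fobj_finsupp _ _ x0) -EFinB /conj_gain.
by rewrite [in RHS]sumrB; congr EFin; ring.
Qed.

Lemma gind0 : gind (fun _ => 0 : R) = 0%E.
Proof. by rewrite /gind asboolT. Qed.

Lemma gind_neq0 (x : nat -> R) : x <> (fun _ => 0) -> gind x = +oo%E.
Proof. by move=> x_neq0; rewrite /gind asboolF. Qed.

Lemma gind_conj (y : nat -> R) : fconj (@gind R) y = 0%E.
Proof.
have obj0 : ((pairing y (fun _ => 0%R))%:E - gind (fun _ => 0%R))%E = 0%E.
  by rewrite gind0 (pairing_finsupp _ _ 0) // big_geq // sube0.
apply/eqP; rewrite eq_le; apply/andP; split.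
  apply: ge_ereal_sup => _ [x _ <-].
  have [->|x_neq0] := pselect (x = fun _ => 0); first by rewrite obj0.
  by rewrite gind_neq0 //= leNye.
by apply: ereal_sup_ubound; exists (fun _ => 0); first by exists 0%N.
Qed.

Lemma fobj0 : fobj (fun _ => 0) = (pi ^+ 2 / 12 : R)%:E.
Proof. by rewrite (fobj_finsupp _ 0) // big_geq // addr0. Qed.

Lemma primal_value :
  ereal_inf [set (fobj x + gind x)%E | x in @cc R] = (pi ^+ 2 / 12)%:E.
Proof.
apply/eqP; rewrite eq_le; apply/andP; split.
  apply: ereal_inf_lbound; exists (fun _ => 0); first by exists 0%N.
  by rewrite fobj0 gind0 adde0.
apply: le_ereal_inf_tmp => _ [x [M x0] <-].
have [->|x_neq0] := pselect (x = fun _ => 0); first by rewrite fobj0 gind0 adde0.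
by rewrite gind_neq0 // (fobj_finsupp _ _ x0) /= leey.
Qed.

(* The coordinatewise maximizer of [conj_gain], truncated after N terms. *)
Lemma fobj_conj_ge (y : nat -> R) N :
  ((\sum_(0 <= k < N) (1 + y k) ^+ 2 * fterm k 0 - pi ^+ 2 / 12)%:E
     <= fconj (@fobj R) y)%E.
Proof.
pose x k := if (k < N)%N then (1 + y k) * inv_sq k else 0.
have x0 k : (N <= k)%N -> x k = 0 by rewrite /x ltnNge => ->.
apply: ereal_sup_ubound; exists x; first by exists N.
rewrite (conj_objective_finsupp _ _ _ x0); congr (_ - _)%:E.
by apply: eq_big_nat => k /andP[_ kN]; rewrite /x kN conj_gain_argmax.
Qed.

(* Truncations of the constant sequence -1, the would-be dual solution outside l^2. *)
Definition neg1_upto (N k : nat) : R := if (k < N)%N then -1 else 0.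

Lemma fobj_conj_neg1_upto N :
  (fconj (@fobj R) (neg1_upto N) <= (- series (fterm^~ 0) N)%:E)%E.
Proof.
apply: ge_ereal_sup => _ [x [M x0] <-].
have x0' k : (maxn M N <= k)%N -> x k = 0.
  by rewrite geq_max => /andP[Mk _]; exact: x0.
have NM : (N <= maxn M N)%N by rewrite leq_maxr.
rewrite (conj_objective_finsupp _ _ _ x0') lee_fin.
have gain : \sum_(0 <= k < maxn M N) conj_gain k (neg1_upto N k) (x k)
    <= series (fterm^~ 0) (maxn M N) - series (fterm^~ 0) N.
  apply: le_trans (ler_sum_nat (fun k _ => conj_gain_le _ _ (x k))) _.
  rewrite /series /= (big_cat_nat _ NM) //= [X in _ <= X - _](big_cat_nat _ NM) //=.
  rewrite [X in _ <= X]addrAC subrr add0r.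
  rewrite big1_seq ?add0r => [|k]; last first.
    rewrite mem_index_iota /neg1_upto => /andP[_ /andP[_ ->]].
    by rewrite subrr expr0n mul0r.
  apply: ler_sum_nat => k /andP[Nk _]; rewrite /neg1_upto ltnNge Nk.
  by rewrite addr0 expr1n mul1r.
by have := series_fterm0_le (maxn M N); lra.
Qed.

Lemma cc_sub_l2 : @cc R `<=` @l2 R.
Proof.
move=> x [M x0]; rewrite /l2 /= (eseries_EFin _ (series (fun k => x k ^+ 2) M)) ?ltry //.
by apply: cvg_series_finsupp => k /x0 ->; rewrite expr0n.
Qed.

Lemma l2_cst (c : R) : c != 0 -> ~ l2 (fun _ => c).
Proof.
move=> c0; rewrite /l2 /=; set S := (\sum_(0 <= k <oo) _)%E => S_fin.
have ge_partial n : ((n%:R * c ^+ 2)%:E <= S)%E.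
  apply: le_trans (nneseries_lim_ge n _) => [|k _ _]; last by rewrite lee_fin sqr_ge0.
  by rewrite sumEFin sumr_const_nat subn0 mulr_natl.
have c2 : 0 < c ^+ 2 by rewrite lt_def sqr_ge0 sqrf_eq0 c0.
move: S_fin ge_partial; case: S => [r _ ge_partial| // | _ ge_partial]; last first.
  by have := ge_partial 0%N.
have := ge_partial (Num.trunc (r / c ^+ 2)).+1; rewrite lee_fin -ler_pdivlMr //.
by rewrite leNgt truncnS_gt.
Qed.

Lemma dual_value :
  ereal_sup [set (- fconj (@fobj R) y)%E | y in @l2 R] = (pi ^+ 2 / 12)%:E.
Proof.
apply/eqP; rewrite eq_le; apply/andP; split.
  apply: ge_ereal_sup => _ [y _ <-]; rewrite leeNl -EFinN.
  by have := fobj_conj_ge y 0; rewrite big_geq // sub0r.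
set s := ereal_sup _.
have ge_series N : ((series (fterm^~ 0) N)%:E <= s)%E.
  apply: le_ereal_sup_tmp; exists (- fconj (@fobj R) (neg1_upto N))%E.
    exists (neg1_upto N) => //; apply: cc_sub_l2; exists N => k.
    by rewrite /neg1_upto ltnNge => ->.
  by rewrite leeNr -EFinN; exact: fobj_conj_neg1_upto.
case: s ge_series => [r ge_series| _ | ge_series]; last 2 first.
- exact: leey.
- by have := ge_series 0%N.
rewrite lee_fin -(cvg_lim _ cvg_series_fterm0) //.
apply: limr_le; first by apply/cvg_ex; exists (pi ^+ 2 / 12); exact: cvg_series_fterm0.
by near=> N; rewrite -lee_fin.
Unshelve. all: by end_near.
Qed.

Lemma dual_lt (y : nat -> R) : l2 y -> (- fconj (@fobj R) y < (pi ^+ 2 / 12)%:E)%E.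
Proof.
move=> y_l2; rewrite ltNge; apply/negP => ge.
have sum_le0 N : \sum_(0 <= k < N) (1 + y k) ^+ 2 * fterm k 0 <= 0.
  have := fobj_conj_ge y N; rewrite -leeN2 -EFinN opprB => /(le_trans ge).
  by rewrite lee_fin; lra.
have y_neg1 k : y k = -1.
  have := sum_le0 k.+1; rewrite big_nat_recr //= => le0.
  have : (1 + y k) ^+ 2 * fterm k 0 <= 0.
    apply: le_trans le0; rewrite lerDr sumr_ge0 // => i _.
    by rewrite mulr_ge0 ?sqr_ge0 ?ltW ?fterm0_gt0.
  rewrite pmulr_lle0 ?fterm0_gt0 // => sq_le0.
  have : (1 + y k) ^+ 2 == 0 by rewrite eq_le sq_le0 sqr_ge0.
  by rewrite sqrf_eq0 addrC addr_eq0 => /eqP.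
by apply: (@l2_cst (-1)); rewrite ?oppr_eq0 // -(funext y_neg1).
Qed.

End Duality.

Theorem mainTheorem6 (R : realType) :
  (* g^* = 0 on l^2 *)
  (forall y : nat -> R, l2 y -> fconj (@gind R) y = 0%E) /\
  (* primal value is f(0) = pi^2/12 *)
  fobj (fun _ : nat => 0 : R) = (pi ^+ 2 / 12 : R)%:E /\
  ereal_inf [set (fobj x + gind x)%E | x in @cc R] = (pi ^+ 2 / 12 : R)%:E /\
  (* dual value is pi^2/12 (no duality gap) *)
  ereal_sup [set (- fconj (@fobj R) y - fconj (@gind R) (fun k => (- y k)%R))%E
            | y in @l2 R] = (pi ^+ 2 / 12 : R)%:E /\
  ereal_sup [set (- fconj (@fobj R) y)%E | y in @l2 R] = (pi ^+ 2 / 12 : R)%:E /\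
  (* the dual supremum is not attained *)
  ~ (exists y : nat -> R, l2 y /\
       (- fconj (@fobj R) y - fconj (@gind R) (fun k => (- y k)%R))%E
         = (pi ^+ 2 / 12 : R)%:E).
Proof.
have dual_obj (y : nat -> R) :
    (- fconj (@fobj R) y - fconj (@gind R) (fun k => (- y k)%R))%E = (- fconj (@fobj R) y)%E.
  by rewrite gind_conj sube0.
split; first by move=> y _; exact: gind_conj.
split; first exact: fobj0.
split; first exact: primal_value.
split.
  by rewrite -dual_value; congr ereal_sup; apply: eq_imagel => y _; exact: dual_obj.
split; first exact: dual_value.
by move=> [y [/dual_lt + ]]; rewrite dual_obj => /[swap] ->; rewrite ltxx.
Qed.
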